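(* Consider the following two-phase MIX communication protocol between a single receiver $R$ and $v$ senders, run over $(t+1)^2$ distinct MIX servers organised into $t+1$ pairwise disjoint blocks $B_1,\dots,B_{t+1}$, where $B_k=\{MIX_{k,1},\dots,MIX_{k,t+1}\}$ and $MIX_{k,1}$ is called the leader of $B_k$ (so every MIX server belongs to exactly one block and is used in exactly one mixing step). Private channels connect $R$ with each server of $B_1$, each server of $B_k$ with each server of $B_{k+1}$ ($k\le t$), and each server of $B_{t+1}$ with each sender. Phase A (receiver to senders). $R$ has one-time pads $\pi^1_1,\dots,\pi^1_v\in\mathbb{F}_{2^l}$. For each $i$, $R$ splits $\pi^1_i$ into $t+1$ shares $\pi^1_{i,1},\dots,\pi^1_{i,t+1}\in\mathbb{F}_{2^l}$ (uniformly random subject to their XOR being $\pi^1_i$) and privately sends $\pi^1_{i,j}$ to $MIX_{1,j}$. Then for $k=1,\dots,t+1$: the leader of $B_k$ chooses a uniformly random permutation $\rho_k\in S_v$ and tells it to all servers in $B_k$, who reindex their shares by $\pi^k_{i,j}:=\pi^k_{\rho_k(i),j}$; the leader of $B_k$ chooses uniformly random modifiers $\omega^k_{i,j}\in\mathbb{F}_{2^l}$ and privately sends $\omega^k_{i,j}$ to $MIX_{k,j}$; each $MIX_{k,j}$ computes $\pi^{k+1}_{i,j}=\omega^k_{i,j}+\pi^k_{i,j}$ (addition in $\mathbb{F}_{2^l}$, i.e. XOR) and, if $k\le t$, sends $\pi^{k+1}_{i,j}$ to $MIX_{k+1,j}$. Finally, denoting the shares held by $MIX_{t+1,j}$ by $\phi_{i,j}$,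 $MIX_{t+1,j}$ sends $\phi_{i,j}$ to the $i$-th sender, who XORs the $t+1$ received shares to obtain its (permuted and modified) pad. Phase B (senders to receiver). Each sender XORs its secret message with the pad it reconstructed and sends the result to the leader of $B_{t+1}$; the ciphertexts are then passed back from leader to leader ($B_{t+1}$ to $B_t$ to $\dots$ to $B_1$ to $R$), each leader of $B_k$ undoing its step by removing (XORing) the modifiers $\omega^k_i=\bigoplus_j\omega^k_{i,j}$ and applying the inverse permutation $\rho_k^{-1}$; $R$ recovers each message by XORing with the corresponding original pad. Suppose the adversary is passive (it only observes, never deviates from the protocol), computationally unbounded, and controls (sees the complete view of) at most $t$ MIX servers. Then this protocol is a perfectly reliable, perfectly private and perfectly anonymous message transmission protocol.
   Context: Perfectly reliable: every transmitted message is received by its intended recipient with probability 1. Perfectly private: for any coalition of at most $t$ corrupted parties, their probability of correctly determining any transmitted message (pad or sender's secret) is the same whether or not they are given their view of the protocol. Perfectly anonymous: for any coalition of at most $t$ corrupted parties, their probability of correctly determining which sender sent (respectively received) any given message is the same whether or not they are given their view of the protocol. *)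

From HB Require Import structures.
From mathcomp Require Import all_boot all_order all_algebra all_fingroup.
Set Implicit Arguments. Unset Strict Implicit. Unset Printing Implicit Defensive.
Import Order.TTheory GRing.Theory Num.Theory.
Local Open Scope ring_scope.

(* Blocks k : 'I_t.+1 (0-indexed: block k is B_{k+1}); a server is a pair
   (k, j) : 'I_t.+1 * 'I_t.+1, i.e. MIX_{k+1,j+1}; j = ord0 is the leader. *)
Notation server t := ('I_t.+1 * 'I_t.+1)%type.

(* All random choices of the (honest) parties:
   - pad  : R's one-time pads pi^1_i,
   - sh   : R's shares pi^1_{i,j} (constrained to XOR to the pad),
   - rho  : the permutation rho_k chosen by the leader of block k,
   - om   : the modifiers omega^k_{i,j} chosen by the leader of block k. *)
Notation coins F v t :=
  ({ffun 'I_v -> F} * {ffun 'I_v * 'I_t.+1 -> F} * {ffun 'I_t.+1 -> {perm 'I_v}}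
   * {ffun 'I_t.+1 * 'I_v * 'I_t.+1 -> F})%type.

Notation msgs F v := {ffun 'I_v -> F} (only parsing).

Definition pad {F : finFieldType} {v t : nat} (c : coins F v t) := c.1.1.1.
Definition sh {F : finFieldType} {v t : nat} (c : coins F v t) := c.1.1.2.
Definition rho {F : finFieldType} {v t : nat} (c : coins F v t) := c.1.2.
Definition om {F : finFieldType} {v t : nat} (c : coins F v t) := c.2.

(* R's shares are uniformly random subject to XOR-ing to the pad; the pads
   themselves are uniform: the coin space is uniform on consistent coins. *)
Definition consistent {F : finFieldType} {v t : nat} (c : coins F v t) : bool :=
  [forall i : 'I_v, \sum_(j < t.+1) sh c (i, j) == pad c i].

(* lvl c k i j = share pi^{k+1}_{i,j}: the share of index i held as input by
   MIX_{k+1,j+1} (k <= t); lvl c t.+1 i j = phi_{i,j} (held by the last block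
   after its step, sent to sender i). *)
Fixpoint lvl {F : finFieldType} {v t : nat} (c : coins F v t) (k : nat)
  : 'I_v -> 'I_t.+1 -> F :=
  if k is k'.+1 then
    fun i j => om c (inord k', i, j) + lvl c k' (rho c (inord k') i) j
  else fun i j => sh c (i, j).

(* origin c k i = index of R's original pad that lies at position i after
   the steps of blocks 1..k; sender i receives (a modification of) the pad
   of index origin c t.+1 i. *)
Fixpoint origin {F : finFieldType} {v t : nat} (c : coins F v t) (k : nat)
  (i : 'I_v) : 'I_v :=
  if k is k'.+1 then origin c k' (rho c (inord k') i) else i.

Definition sender_pad {F : finFieldType} {v t : nat} (c : coins F v t) (i : 'I_v) : F :=
  \sum_(j < t.+1) lvl c t.+1 i j.

(* Phase B: back c m n = vector of ciphertexts after the leaders of the last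
   n blocks undid their step; back c m 0 = the senders' ciphertexts (received
   by the leader of B_{t+1}); back c m (t - k) is received by the leader of
   block k (0-indexed); back c m t.+1 is received by R. *)
Fixpoint back {F : finFieldType} {v t : nat} (c : coins F v t) (m : msgs F v)
  (n : nat) : 'I_v -> F :=
  if n is n'.+1 then
    let k : 'I_t.+1 := inord (t - n') in
    fun p => back c m n' (((rho c k)^-1)%g p) + \sum_(j < t.+1) om c (k, ((rho c k)^-1)%g p, j)
  else fun i => m i + sender_pad c i.

Definition R_output {F : finFieldType} {v t : nat} (c : coins F v t) (m : msgs F v)
  (p : 'I_v) : F := back c m t.+1 p + pad c p.

(* Phase A view of server (k,j): received shares, rho_k (told by/chosen by the
   leader), its modifiers, and (for the leader) all modifiers it chose.  What it
   sends is a function of these data. *)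
Definition viewA_srv {F : finFieldType} {v t : nat} (c : coins F v t)
  (s : server t) :
  ({ffun 'I_v -> F} * {perm 'I_v} * {ffun 'I_v -> F}
   * option {ffun 'I_v * 'I_t.+1 -> F})%type :=
  (finfun (fun i => lvl c s.1 i s.2), rho c s.1,
   finfun (fun i => om c (s.1, i, s.2)),
   if s.2 == ord0 then Some (finfun (fun ij : 'I_v * 'I_t.+1 => om c (s.1, ij.1, ij.2)))
   else None).

Definition viewB_srv {F : finFieldType} {v t : nat} (c : coins F v t) (m : msgs F v)
  (s : server t) : option {ffun 'I_v -> F} :=
  if s.2 == ord0 then Some (finfun (back c m (t - s.1))) else None.

Definition viewA {F : finFieldType} {v t : nat} (C : {set server t})
  (m : msgs F v) (c : coins F v t) :=
  [ffun s : server t => if s \in C then Some (viewA_srv c s) else None].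

Definition viewFull {F : finFieldType} {v t : nat} (C : {set server t})
  (m : msgs F v) (c : coins F v t) :=
  [ffun s : server t => if s \in C then Some (viewA_srv c s, viewB_srv c m s) else None].

Definition is_dist {T : finType} (mu : {ffun T -> rat}) : Prop :=
  (forall x, 0 <= mu x) /\ \sum_x mu x = 1.

(* Probability of an event over the joint space (message ~ mu, independent of
   the protocol's coins, which are uniform on the consistent ones). *)
Definition Pr {F : finFieldType} {v t : nat} (mu : {ffun msgs F v -> rat})
  (E : msgs F v -> coins F v t -> bool) : rat :=
  \sum_(m : msgs F v) mu m *
    ((#|[set c : coins F v t | consistent c && E m c]|)%:R
     / (#|[set c : coins F v t | consistent c]|)%:R).

(* Optimal probability of correctly determining a quantity (a guess x is
   correct iff correct m c x) when given the view, resp. without it. *)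
Definition best_with {F : finFieldType} {v t : nat} {V X : finType}
  (mu : {ffun msgs F v -> rat}) (view : msgs F v -> coins F v t -> V)
  (correct : msgs F v -> coins F v t -> X -> bool) : rat :=
  \big[Num.max/0]_(g : {ffun V -> X}) Pr mu (fun m c => correct m c (g (view m c))).

Definition best_blind {F : finFieldType} {v t : nat} {X : finType}
  (mu : {ffun msgs F v -> rat})
  (correct : msgs F v -> coins F v t -> X -> bool) : rat :=
  \big[Num.max/0]_(x : X) Pr mu (fun m c => correct m c x).

From HB Require Import structures.
From mathcomp Require Import all_boot all_order all_algebra all_fingroup.
From mathcomp Require Import ring zify.
Import Order.TTheory GRing.Theory Num.Theory.
Local Open Scope ring_scope.

(** Reliability: in characteristic 2 each leader's phase-B unmasking cancels
    the modifiers of its block, and R's shares XOR to its pad.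

    Privacy and anonymity: a coalition of at most [t] servers misses some share
    index [j0] and some block [k0].  On the uniformly distributed consistent
    coins the coalition's view is invariant under two families of bijections.
    The first adds a vector to the pads and to the [j0]-th shares; it changes
    any pad, or trades one message vector for another, unseen.  The second lets
    block [k0] compose its permutation with a transposition, re-choosing its
    modifiers so that every share leaving the block is unchanged and patching
    the pads so that the ciphertexts seen by the other leaders are unchanged;
    it exchanges which senders receive which pads.  So the view is independent
    of the quantity to be guessed and cannot help an optimal guesser. *)

Set Implicit Arguments. Unset Strict Implicit. Unset Printing Implicit Defensive.

Section Counting.
Variable T : finType.
Implicit Types (A : pred T).

Lemma card_set_sum A : #|[set c | A c]| = (\sum_c A c)%N.
Proof. by rewrite -sum1dep_card big_mkcond. Qed.

Lemma card_set_fibers (V : finType) A (view : T -> V) (Q : T -> V -> bool) :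
  #|[set c | A c && Q c (view c)]| =
  (\sum_w #|[set c | A c && (view c == w) && Q c w]|)%N.
Proof.
under [RHS]eq_bigr do rewrite card_set_sum.
rewrite card_set_sum exchange_big; apply: eq_bigr => c _ /=.
rewrite (bigD1 (view c)) //= eqxx andbT big1 ?addn0 // => w /negbTE nw.
by rewrite eq_sym nw andbF.
Qed.

Lemma card_set_can (f g : T -> T) A B :
  cancel f g -> (forall c, B (f c) = A c) -> #|[set c | A c]| = #|[set c | B c]|.
Proof.
move=> fK hB; rewrite -[RHS](card_preimset _ (can_inj fK)).
by apply: eq_card => c; rewrite !inE hB.
Qed.

Lemma card_set_unique (X : finType) A (correct : T -> X -> bool) (tgt : T -> X) :
  (forall c, A c -> forall x, correct c x = (x == tgt c)) ->
  #|[set c | A c]| = (\sum_x #|[set c | A c && correct c x]|)%N.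
Proof.
move=> hU; under [RHS]eq_bigr do rewrite card_set_sum.
rewrite card_set_sum exchange_big; apply: eq_bigr => c _ /=.
case Ac: (A c) => /=; last by rewrite big1.
rewrite (bigD1 (tgt c)) //= hU // eqxx big1 ?addn0 // => x nx.
by rewrite hU // (negbTE nx).
Qed.

Section Swaps.
Variables (V X : finType) (A : pred T) (view : T -> V).
Variables (correct : T -> X -> bool) (tgt : T -> X).
Hypothesis correct_unique : forall c, A c -> forall x, correct c x = (x == tgt c).
Hypothesis swaps : forall x y, exists f g : T -> T, [/\ cancel f g,
  forall c, A (f c) = A c &
  forall c, A c -> view (f c) = view c /\ correct (f c) y = correct c x].

Lemma card_set_view_split (P : pred V) x :
  #|[set c | A c && P (view c)]| =
  (#|X| * #|[set c | A c && P (view c) && correct c x]|)%N.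
Proof.
rewrite (@card_set_unique X _ correct tgt); last first.
  by move=> c /andP[Ac _]; apply: correct_unique.
rewrite -sum_nat_const; apply: eq_bigr => y _.
have [f [g [fK fA fV]]] := swaps y x; apply: (card_set_can fK) => c.
by rewrite fA; case Ac: (A c) => //=; have [-> ->] := fV c Ac.
Qed.

(* Trading values by such bijections makes [view] independent of the
   correct value under the uniform law on [A]. *)
Lemma card_fiber_indep w x :
  (#|[set c | A c && (view c == w) && correct c x]| * #|[set c | A c]| =
   #|[set c | A c && (view c == w)]| * #|[set c | A c && correct c x]|)%N.
Proof.
have := card_set_view_split predT x; rewrite /=.
have -> : [set c | A c && true] = [set c | A c].
  by apply/setP => c; rewrite !inE andbT.
have -> : [set c | A c && true && correct c x] = [set c | A c && correct c x].
  by apply/setP => c; rewrite !inE andbT.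
move=> ->.
have -> := card_set_view_split (fun v => v == w) x.
by rewrite mulnCA mulnA.
Qed.

End Swaps.

End Counting.

Section Guessing.
Variables (F : finFieldType) (v t : nat).
Notation coinsT := (coins F v t).
Notation msgsT := (msgs F v).
Let ncons := #|[set c : coinsT | consistent c]|.

Lemma card_consistent_gt0 : (0 < ncons)%N.
Proof.
rewrite card_gt0; apply/set0Pn.
exists ([ffun => 0], [ffun => 0], [ffun => 1%g], [ffun => 0]); rewrite inE.
by apply/forallP => i; rewrite /sh /pad /= ffunE big1 // => j _; rewrite ffunE.
Qed.

Variables (V X : finType) (mu : {ffun msgsT -> rat}) (view : msgsT -> coinsT -> V).
Variables (correct : msgsT -> coinsT -> X -> bool) (D : V -> nat).
Hypothesis card_view_fiber :
  forall m w, #|[set c | consistent c && (view m c == w)]| = D w.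

Section Independent.
Hypothesis view_indep : forall m w x,
  (#|[set c | consistent c && (view m c == w) && correct m c x]| * ncons =
   D w * #|[set c | consistent c && correct m c x]|)%N.

Lemma Pr_guess_fibers (g : V -> X) :
  Pr mu (fun m c => correct m c (g (view m c))) =
  \sum_w (D w)%:R / ncons%:R * Pr mu (fun m c => correct m c (g w)).
Proof.
have N0 : ncons%:R != 0 :> rat by rewrite pnatr_eq0 -lt0n card_consistent_gt0.
under eq_bigr => w _ do rewrite /Pr mulr_sumr.
rewrite exchange_big /=; apply: eq_bigr => m _.
rewrite (card_set_fibers _ (view m) (fun c w => correct m c (g w))) natr_sum.
rewrite !mulr_suml mulr_sumr; apply: eq_bigr => w _.
have -> : (#|[set c | consistent c && (view m c == w) && correct m c (g w)]|)%:R =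
    (D w)%:R * (#|[set c | consistent c && correct m c (g w)]|)%:R / ncons%:R :> rat.
  by apply: (mulIf N0); rewrite divfK // -!natrM view_indep.
by field.
Qed.

Lemma best_with_eq_blind : best_with mu view correct = best_blind mu correct.
Proof.
have N0 : ncons%:R != 0 :> rat by rewrite pnatr_eq0 -lt0n card_consistent_gt0.
have sumD : (\sum_w D w)%N = ncons.
  have -> : ncons = #|[set c | consistent c && (fun _ _ => true) c (view 0 c)]|.
    by apply: eq_card => c; rewrite !inE andbT.
  rewrite (card_set_fibers _ (view 0) (fun _ _ => true)).
  apply: eq_bigr => w _; rewrite -(card_view_fiber 0 w).
  by apply: eq_card => c; rewrite !inE andbT.
apply/eqP; rewrite eq_le; apply/andP; split.
  apply: bigmax_le; first exact: bigmax_ge_id.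
  move=> g _; rewrite Pr_guess_fibers.
  apply: le_trans (_ : \sum_w (D w)%:R / ncons%:R * best_blind mu correct <= _).
    apply: ler_sum => w _; apply: ler_wpM2l; first by rewrite divr_ge0.
    exact: le_bigmax.
  by rewrite -!mulr_suml -natr_sum sumD mulfV // mul1r.
apply: bigmax_le; first exact: bigmax_ge_id.
move=> x _; apply: le_trans (le_bigmax _ _ [ffun _ => x]).
rewrite le_eqVlt; apply/orP; left; apply/eqP; apply: eq_bigr => m _.
by congr (_ * (_ / _)); congr (_%:R); apply: eq_card => c; rewrite !inE ffunE.
Qed.

End Independent.

Lemma best_with_eq_blind_coin_free (P : msgsT -> X -> bool) :
  (forall m c x, correct m c x = P m x) -> best_with mu view correct = best_blind mu correct.
Proof.
move=> hP; apply: best_with_eq_blind => m w x.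
rewrite -(card_view_fiber m w).
have eP (B : pred coinsT) :
    [set c | B c && correct m c x] = if P m x then [set c | B c] else set0.
  by apply/setP => c; rewrite !inE hP; case: (P m x); rewrite ?inE ?andbT ?andbF.
rewrite (eP (fun c => consistent c && (view m c == w))) (eP consistent).
by case: (P m x); rewrite ?cards0 ?muln0 ?mul0n.
Qed.

Lemma best_with_eq_blind_swaps (tgt : msgsT -> coinsT -> X) :
  (forall m c, consistent c -> forall x, correct m c x = (x == tgt m c)) ->
  (forall m x y, exists f g : coinsT -> coinsT, [/\ cancel f g,
     forall c, consistent (f c) = consistent c &
     forall c, consistent c -> view m (f c) = view m c /\ correct m (f c) y = correct m c x]) ->
  best_with mu view correct = best_blind mu correct.
Proof.
move=> hU hS; apply: best_with_eq_blind => m w x; rewrite -(card_view_fiber m w).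
exact: (card_fiber_indep (hU m) (hS m)).
Qed.

End Guessing.

Section Reliability.
Variables (F : finFieldType) (v t : nat).
Notation coinsT := (coins F v t).

Fixpoint route (c : coinsT) (k : nat) : {perm 'I_v} :=
  if k is k'.+1 then (rho c (inord k') * route c k')%g else 1%g.

Lemma origin_route c k i : origin c k i = route c k i.
Proof. by elim: k i => [|k IH] i /=; rewrite ?perm1 // IH permM. Qed.

Lemma eq_route (c c' : coinsT) k : rho c' = rho c -> route c' k = route c k.
Proof. by move=> e; elim: k => //= k ->; rewrite e. Qed.

Definition share_sum (c : coinsT) k (a : 'I_v) := \sum_(j < t.+1) lvl c k a j.

Lemma lvlS (c : coinsT) k i j :
  lvl c k.+1 i j = om c (inord k, i, j) + lvl c k (rho c (inord k) i) j.
Proof. by []. Qed.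

Lemma om_lvl (c : coinsT) (k : 'I_t.+1) i j :
  om c (k, i, j) = lvl c k.+1 i j - lvl c k (rho c k i) j.
Proof. by rewrite lvlS inord_val addrK. Qed.

Lemma share_sumS c k a : share_sum c k.+1 a =
  \sum_(j < t.+1) om c (inord k, a, j) + share_sum c k (rho c (inord k) a).
Proof. by rewrite /share_sum -big_split. Qed.

Lemma backS (c : coinsT) m n p : back c m n.+1 p =
  back c m n ((rho c (inord (t - n)))^-1%g p) +
  \sum_(j < t.+1) om c (inord (t - n), (rho c (inord (t - n)))^-1%g p, j).
Proof. by []. Qed.

Hypothesis char2 : 2%N \in [pchar F].

(* In characteristic 2 each leader's phase-B modifier cancels the phase-A one. *)
Lemma back_share_sum (c : coinsT) m n : (n <= t.+1)%N -> forall i,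
  let q := ((route c (t.+1 - n))^-1)%g (route c t.+1 i) in
  back c m n q = m i + share_sum c (t.+1 - n) q.
Proof.
elim: n => [|n IH] hn i; set O := route c t.+1 i.
  by rewrite /= subn0 permK.
have hnt : (n <= t)%N := hn.
rewrite subSS /=.
set K := rho c (inord (t - n)).
have eq : ((route c (t.+1 - n))^-1)%g O = (K^-1)%g (((route c (t - n))^-1)%g O).
  by rewrite (subSn hnt) /= invMg permM.
rewrite -eq (IH (ltnW hn) i) -/O eq (subSn hnt) share_sumS -/K permKV.
rewrite -addrA (addrC (\sum_j _)) addrA -addrA; congr (_ + _).
by rewrite -addrA addrr_pchar2 // addr0.
Qed.

Lemma R_output_origin (c : coinsT) m :
  consistent c -> forall i, R_output c m (origin c t.+1 i) = m i.
Proof.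
move=> /forallP hc i; rewrite /R_output origin_route.
have := back_share_sum c m (leqnn t.+1) i; rewrite subnn /= invg1 perm1 => ->.
by rewrite /share_sum /= (eqP (hc _)) -addrA addrr_pchar2 // addr0.
Qed.

End Reliability.

Section PadShift.
Variables (F : finFieldType) (v t : nat) (j0 : 'I_t.+1).
Notation coinsT := (coins F v t).
Notation msgsT := (msgs F v).

Lemma coins_ext (c c' : coinsT) :
  pad c = pad c' -> sh c = sh c' -> rho c = rho c' -> om c = om c' -> c = c'.
Proof.
case: c => [[[? ?] ?] ?]; case: c' => [[[? ?] ?] ?].
by rewrite /pad /sh /rho /om /= => -> -> -> ->.
Qed.

Definition shift_pads (d : {ffun 'I_v -> F}) (c : coinsT) : coinsT :=
  ([ffun a => pad c a + d a],
   [ffun ij : 'I_v * 'I_t.+1 => if ij.2 == j0 then sh c ij + d ij.1 else sh c ij],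
   rho c, om c).

Lemma pad_shift_pads d (c : coinsT) a : pad (shift_pads d c) a = pad c a + d a.
Proof. by rewrite /pad /= ffunE. Qed.

Lemma sh_shift_pads d (c : coinsT) a j :
  sh (shift_pads d c) (a, j) = if j == j0 then sh c (a, j) + d a else sh c (a, j).
Proof. by rewrite /sh /= ffunE. Qed.

Lemma shift_padsK d (c : coinsT) : shift_pads (- d) (shift_pads d c) = c.
Proof.
apply: coins_ext => //; apply/ffunP => x; rewrite /shift_pads /pad /sh /= !ffunE.
  by rewrite addrK.
by case: (x.2 == j0); rewrite ?addrK.
Qed.

Lemma lvl_shift_pads d (c : coinsT) k i j :
  lvl (shift_pads d c) k i j = lvl c k i j + (if j == j0 then d (origin c k i) else 0).
Proof.
elim: k i => [|k IH] i /=; last by rewrite IH addrA.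
by rewrite /sh /= ffunE /=; case: ifP; rewrite ?addr0.
Qed.

Lemma share_sum_shift_pads d (c : coinsT) k a :
  share_sum (shift_pads d c) k a = share_sum c k a + d (origin c k a).
Proof.
rewrite /share_sum; under eq_bigr do rewrite lvl_shift_pads.
rewrite big_split /=; congr (_ + _).
by rewrite (bigD1 j0) //= eqxx big1 ?addr0 // => j /negbTE ->.
Qed.

Lemma sender_pad_shift_pads d (c : coinsT) i :
  sender_pad (shift_pads d c) i = sender_pad c i + d (origin c t.+1 i).
Proof. exact: share_sum_shift_pads. Qed.

Lemma consistent_shift_pads d (c : coinsT) :
  consistent (shift_pads d c) = consistent c.
Proof.
apply: eq_forallb => i.
have -> : \sum_(j < t.+1) sh (shift_pads d c) (i, j) = \sum_(j < t.+1) sh c (i, j) + d i.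
  rewrite (bigD1 j0) //= [in RHS](bigD1 j0) //= sh_shift_pads eqxx.
  rewrite -!addrA (addrC (d i)); congr (_ + (_ + _)).
  by apply: eq_bigr => j /negbTE nj; rewrite sh_shift_pads nj.
by rewrite pad_shift_pads (inj_eq (addIr _)).
Qed.

Lemma eq_back (c c' : coinsT) (m m' : msgsT) : rho c' = rho c -> om c' = om c ->
  (forall i, m' i + sender_pad c' i = m i + sender_pad c i) ->
  forall n p, back c' m' n p = back c m n p.
Proof. by move=> er eo es; elim => [|n IH] p //=; rewrite IH er eo. Qed.

Section Coalition.
Variable C : {set server t}.
Hypothesis C_avoids_j0 : forall s, s \in C -> s.2 != j0.

Lemma viewA_srv_shift_pads d (c : coinsT) s :
  s \in C -> viewA_srv (shift_pads d c) s = viewA_srv c s.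
Proof.
move=> sC; rewrite /viewA_srv; congr (_, _, _, _); apply/ffunP => i.
by rewrite !ffunE lvl_shift_pads (negbTE (C_avoids_j0 sC)) addr0.
Qed.

Lemma viewA_shift_pads (m : msgsT) d (c : coinsT) :
  viewA C m (shift_pads d c) = viewA C m c.
Proof.
by apply/ffunP => s; rewrite !ffunE; case: ifP => // sC; rewrite viewA_srv_shift_pads.
Qed.

Lemma viewFull_shift_pads (m m' : msgsT) d (c : coinsT) :
  (forall i, m' i + sender_pad (shift_pads d c) i = m i + sender_pad c i) ->
  viewFull C m' (shift_pads d c) = viewFull C m c.
Proof.
move=> hm; apply/ffunP => s; rewrite !ffunE; case: ifP => // sC.
rewrite viewA_srv_shift_pads // /viewB_srv; case: (s.2 == ord0) => //.
by congr (Some (_, Some _)); apply/ffunP => p; rewrite !ffunE (eq_back _ _ hm).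
Qed.

(* Shifting the pads by the difference of two message vectors, read in the
   senders' order, maps the phase-B ciphertexts of one to those of the other. *)
Lemma card_viewFull_fiber_msg (m m' : msgsT) w :
  #|[set c : coinsT | consistent c && (viewFull C m c == w)]| =
  #|[set c : coinsT | consistent c && (viewFull C m' c == w)]|.
Proof.
pose dm (c : coinsT) : {ffun 'I_v -> F} :=
  [ffun a => m (((route c t.+1)^-1)%g a) - m' (((route c t.+1)^-1)%g a)].
have dm_shift c : dm (shift_pads (dm c) c) = dm c.
  by apply/ffunP => a; rewrite !ffunE (@eq_route _ _ _ c).
apply: (@card_set_can _ (fun c => shift_pads (dm c) c) (fun c => shift_pads (- dm c) c)).
  by move=> c /=; rewrite dm_shift shift_padsK.
move=> c; rewrite consistent_shift_pads (@viewFull_shift_pads m) // => i.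
by rewrite sender_pad_shift_pads ffunE origin_route permK; ring.
Qed.

End Coalition.
End PadShift.

Section Blocks.
Variables (F : finFieldType) (v t : nat).
Notation coinsT := (coins F v t).

Lemma leq_inord n : (@inord t n <= n)%N.
Proof.
case: (ltnP n t.+1) => h; first by rewrite inordK.
by rewrite /inord /insubd insubN // -leqNgt.
Qed.

Lemma ord_ltn_eqF n (i j : 'I_n) : (i < j)%N -> (i == j) = false.
Proof. by move=> lt_ij; rewrite -val_eqE ltn_eqF. Qed.

Lemma ord_gtn_eqF n (i j : 'I_n) : (j < i)%N -> (i == j) = false.
Proof. by move=> lt_ji; rewrite eq_sym ord_ltn_eqF. Qed.

Definition same_block (c c' : coinsT) (k : 'I_t.+1) :=
  rho c' k = rho c k /\ forall i j, om c' (k, i, j) = om c (k, i, j).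

Lemma eq_lvl_below (k0 : nat) (c c' : coinsT) : sh c' = sh c ->
  (forall k : 'I_t.+1, (k < k0)%N -> same_block c c' k) ->
  forall n, (n <= k0)%N -> forall i j, lvl c' n i j = lvl c n i j.
Proof.
move=> es eq; elim => [|n IH] hn i j /=; first by rewrite es.
have [er eo] := eq (inord n) (leq_ltn_trans (leq_inord _) hn).
by rewrite er eo IH //; apply: ltnW.
Qed.

Lemma eq_lvl_above (k0 : 'I_t.+1) (c c' : coinsT) :
  (forall i j, lvl c' k0.+1 i j = lvl c k0.+1 i j) ->
  (forall k : 'I_t.+1, (k0 < k)%N -> same_block c c' k) ->
  forall n, (k0 < n)%N -> (n <= t.+1)%N -> forall i j, lvl c' n i j = lvl c n i j.
Proof.
move=> e0 eq; elim => [//|n IH] hn hnt i j.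
have [->|ne] := eqVneq n k0; first exact: e0.
have hn' : (k0 < n)%N by rewrite ltn_neqAle eq_sym ne -ltnS.
have hk : (k0 < @inord t n)%N by rewrite inordK.
by rewrite /=; have [-> ->] := eq _ hk; rewrite IH //; apply: ltnW.
Qed.

Lemma eq_route_below (k0 : nat) (c c' : coinsT) :
  (forall k : 'I_t.+1, (k < k0)%N -> rho c' k = rho c k) ->
  forall n, (n <= k0)%N -> route c' n = route c n.
Proof.
move=> eq; elim => [//|n IH] hn /=.
rewrite eq ?IH //; [exact: ltnW | exact: leq_ltn_trans (leq_inord _) hn].
Qed.

Definition route_after (k0 : 'I_t.+1) (c : coinsT) : {perm 'I_v} :=
  (route c t.+1 * (route c k0.+1)^-1)%g.

Lemma origin_route_after (k0 : 'I_t.+1) (c : coinsT) i :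
  origin c t.+1 i = route c k0.+1 (route_after k0 c i).
Proof. by rewrite origin_route /route_after permM permKV. Qed.

Lemma eq_route_after (k0 : 'I_t.+1) (c c' : coinsT) :
  (forall k : 'I_t.+1, (k0 < k)%N -> rho c' k = rho c k) ->
  route_after k0 c' = route_after k0 c.
Proof.
move=> eq; rewrite /route_after.
suff : forall n, (k0 < n)%N -> (n <= t.+1)%N ->
  (route c' n * (route c' k0.+1)^-1 = route c n * (route c k0.+1)^-1)%g by apply.
elim => [//|n IH] hn hnt.
have [->|ne] := eqVneq n k0; first by rewrite !mulgV.
have hn' : (k0 < n)%N by rewrite ltn_neqAle eq_sym ne -ltnS.
have hi : inord n = Ordinal hnt :> 'I_t.+1 by apply: val_inj; rewrite /= inordK.
by rewrite /= -!mulgA IH ?(ltnW hnt) // hi eq.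
Qed.

End Blocks.

Section Swap.
Variables (F : finFieldType) (v t : nat).
Notation coinsT := (coins F v t).
Notation msgsT := (msgs F v).
Variables (k0 j0 : 'I_t.+1) (m : msgsT) (x y : 'I_v).

(* Block [k0] now also exchanges the two slots that end up at senders [x] and [y]. *)
Definition swapped_rho (c : coinsT) : {perm 'I_v} :=
  (tperm (route_after k0 c x) (route_after k0 c y) * rho c k0)%g.

(* The phase-B value at slot [q] after the leader of block [k0], unmasked. *)
Definition slot_value (c : coinsT) q := back c m (t - k0) q + share_sum c k0.+1 q.

(* The pad correction that makes the phase-B values received by the earlier
   leaders unaffected by the swap. *)
Definition pad_patch (c : coinsT) : {ffun 'I_v -> F} :=
  [ffun a => let q := ((route c k0)^-1)%g a in
     slot_value c ((swapped_rho c)^-1%g q) - slot_value c ((rho c k0)^-1%g q)].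

Definition patched (c : coinsT) := shift_pads j0 (pad_patch c) c.

(* Block [k0]'s modifiers are re-chosen so that all shares leaving block [k0]
   are unchanged. *)
Definition swap_coins (c : coinsT) : coinsT :=
  (pad (patched c), sh (patched c),
   [ffun k => if k == k0 then swapped_rho c else rho c k],
   [ffun kij : 'I_t.+1 * 'I_v * 'I_t.+1 => if kij.1.1 == k0 then
      lvl c k0.+1 kij.1.2 kij.2 - lvl (patched c) k0 (swapped_rho c kij.1.2) kij.2
    else om c kij]).

Lemma swap_coins_rho c k :
  rho (swap_coins c) k = if k == k0 then swapped_rho c else rho c k.
Proof. by rewrite /rho /= ffunE. Qed.

Lemma swap_coins_om c k i j : om (swap_coins c) (k, i, j) =
  if k == k0 then lvl c k0.+1 i j - lvl (patched c) k0 (swapped_rho c i) j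
  else om c (k, i, j).
Proof. by rewrite /om /= ffunE. Qed.

Lemma swap_coins_consistent c : consistent (swap_coins c) = consistent c.
Proof. exact: consistent_shift_pads. Qed.

Lemma lvl_swap_coins_below c n : (n <= k0)%N ->
  forall i j, lvl (swap_coins c) n i j = lvl (patched c) n i j.
Proof.
apply: eq_lvl_below => // k hk; rewrite /same_block swap_coins_rho ord_ltn_eqF //.
by split => // i j; rewrite swap_coins_om ord_ltn_eqF.
Qed.

Lemma lvl_swap_coins_k0 c i j : lvl (swap_coins c) k0.+1 i j = lvl c k0.+1 i j.
Proof.
by rewrite lvlS inord_val swap_coins_om swap_coins_rho eqxx lvl_swap_coins_below // subrK.
Qed.

Lemma lvl_swap_coins_above c n : (k0 < n)%N -> (n <= t.+1)%N ->
  forall i j, lvl (swap_coins c) n i j = lvl c n i j.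
Proof.
apply: eq_lvl_above; first exact: lvl_swap_coins_k0.
move=> k hk; rewrite /same_block swap_coins_rho ord_gtn_eqF //.
by split => // i j; rewrite swap_coins_om ord_gtn_eqF.
Qed.

Lemma back_swap_coins_above c n : (n <= t - k0)%N ->
  forall p, back (swap_coins c) m n p = back c m n p.
Proof.
elim: n => [|n IH] hn p /=.
  by congr (_ + _); apply: eq_bigr => j _; rewrite lvl_swap_coins_above.
have hk : (k0 < @inord t (t - n))%N.
  by rewrite inordK ?ltnS ?leq_subr //; lia.
rewrite swap_coins_rho ord_gtn_eqF // IH; last exact: ltnW.
by congr (_ + _); apply: eq_bigr => j _; rewrite swap_coins_om ord_gtn_eqF.
Qed.

Lemma back_swap_coins_k0 c p : back (swap_coins c) m (t - k0).+1 p = back c m (t - k0).+1 p.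
Proof.
have hk : (t - (t - k0))%N = k0 by rewrite subKn // -ltnS.
rewrite !backS hk inord_val swap_coins_rho eqxx back_swap_coins_above //.
rewrite (eq_bigr (fun j => lvl c k0.+1 ((swapped_rho c)^-1%g p) j - lvl (patched c) k0 p j));
  last by move=> j _; rewrite swap_coins_om eqxx permKV.
rewrite [in RHS](eq_bigr (fun j => lvl c k0.+1 ((rho c k0)^-1%g p) j - lvl c k0 p j));
  last by move=> j _; rewrite om_lvl permKV.
rewrite !sumrB -!/(share_sum _ _ _) share_sum_shift_pads /pad_patch ffunE.
by rewrite origin_route permK /slot_value; ring.
Qed.

Lemma back_swap_coins_below c n : ((t - k0).+1 <= n)%N -> (n <= t)%N ->
  forall p, back (swap_coins c) m n p = back c m n p.
Proof.
elim: n => [//|n IH] h1 h2 p.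
have [->|ne] := eqVneq n (t - k0)%N; first exact: back_swap_coins_k0.
have h1' : ((t - k0).+1 <= n)%N by rewrite ltn_neqAle eq_sym ne -ltnS.
have hk : (@inord t (t - n) < k0)%N by rewrite inordK ?ltnS ?leq_subr //; lia.
rewrite !backS swap_coins_rho ord_ltn_eqF // IH //; last exact: ltnW.
by congr (_ + _); apply: eq_bigr => j _; rewrite swap_coins_om ord_ltn_eqF.
Qed.

Lemma route_swap_coins_below c n : (n <= k0)%N -> route (swap_coins c) n = route c n.
Proof. by apply: eq_route_below => k hk; rewrite swap_coins_rho ord_ltn_eqF. Qed.

Lemma route_after_swap_coins c : route_after k0 (swap_coins c) = route_after k0 c.
Proof. by apply: eq_route_after => k hk; rewrite swap_coins_rho ord_gtn_eqF. Qed.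

Lemma origin_swap_coins c : origin (swap_coins c) t.+1 y = origin c t.+1 x.
Proof.
rewrite !(origin_route_after k0) route_after_swap_coins /= inord_val.
by rewrite swap_coins_rho eqxx route_swap_coins_below // !permM tpermR.
Qed.

Lemma swapped_rho_swap_coins c : swapped_rho (swap_coins c) = rho c k0.
Proof.
by rewrite /swapped_rho route_after_swap_coins swap_coins_rho eqxx mulgA tperm2 mul1g.
Qed.

Lemma pad_patch_swap_coins c a : pad_patch (swap_coins c) a = - pad_patch c a.
Proof.
have slot_value_swap q : slot_value (swap_coins c) q = slot_value c q.
  rewrite /slot_value back_swap_coins_above //; congr (_ + _).
  by apply: eq_bigr => j _; rewrite lvl_swap_coins_k0.
rewrite /pad_patch !ffunE !slot_value_swap swapped_rho_swap_coins eqxx.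
by rewrite route_swap_coins_below // opprB.
Qed.

Lemma swap_coinsK : involutive swap_coins.
Proof.
move=> c; apply: coins_ext.
- apply/ffunP => a; rewrite /swap_coins /patched /= !pad_shift_pads.
  by rewrite pad_patch_swap_coins addrK.
- apply/ffunP => -[a j]; rewrite /swap_coins /patched /= !sh_shift_pads.
  by case: (j == j0); rewrite ?pad_patch_swap_coins ?addrK.
- apply/ffunP => k; rewrite swap_coins_rho swapped_rho_swap_coins swap_coins_rho.
  by case: eqP => [->|].
- apply/ffunP => -[[k i] j]; rewrite swap_coins_om.
  case: eqP => [->|nk]; last by rewrite swap_coins_om; case: eqP.
  rewrite swapped_rho_swap_coins lvl_swap_coins_k0 om_lvl; congr (_ - _).
  rewrite /patched lvl_shift_pads lvl_swap_coins_below // lvl_shift_pads.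
  rewrite pad_patch_swap_coins !origin_route route_swap_coins_below //.
  by case: (j == j0); rewrite ?addr0 // addrK.
Qed.

Lemma viewA_srv_swap_coins c (s : server t) : s.1 != k0 -> s.2 != j0 ->
  viewA_srv (swap_coins c) s = viewA_srv c s.
Proof.
move=> n1 n2; rewrite /viewA_srv swap_coins_rho (negbTE n1).
congr (_, _, _, _).
- apply/ffunP => i; rewrite !ffunE; have [lt|ge] := ltnP s.1 k0.
    by rewrite lvl_swap_coins_below 1?ltnW // /patched lvl_shift_pads (negbTE n2) addr0.
  have gt : (k0 < s.1)%N by rewrite ltn_neqAle ge andbT eq_sym.
  by rewrite lvl_swap_coins_above //; apply: ltnW.
- by apply/ffunP => i; rewrite !ffunE /= (negbTE n1).
- by case: (s.2 == ord0) => //; congr Some; apply/ffunP => ij; rewrite !ffunE /= (negbTE n1).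
Qed.

Lemma viewB_srv_swap_coins c (s : server t) : s.1 != k0 ->
  viewB_srv (swap_coins c) m s = viewB_srv c m s.
Proof.
move=> n1; rewrite /viewB_srv; case: (s.2 == ord0) => //; congr Some.
apply/ffunP => p; rewrite !ffunE; have hk := ltn_ord k0; have hs := ltn_ord s.1.
have [lt|ge] := ltnP s.1 k0; first by rewrite back_swap_coins_below //; lia.
have gt : (k0 < s.1)%N by rewrite ltn_neqAle ge andbT eq_sym.
by rewrite back_swap_coins_above //; lia.
Qed.

Variable C : {set server t}.
Hypothesis C_avoids : forall s, s \in C -> s.1 != k0 /\ s.2 != j0.

Lemma viewA_swap_coins c : viewA C m (swap_coins c) = viewA C m c.
Proof.
apply/ffunP => s; rewrite !ffunE; case: ifP => // sC.
by have [n1 n2] := C_avoids sC; rewrite viewA_srv_swap_coins.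
Qed.

Lemma viewFull_swap_coins c : viewFull C m (swap_coins c) = viewFull C m c.
Proof.
apply/ffunP => s; rewrite !ffunE; case: ifP => // sC.
by have [n1 n2] := C_avoids sC; rewrite viewA_srv_swap_coins // viewB_srv_swap_coins.
Qed.

End Swap.

Section Properties.
Variables (F : finFieldType) (v t : nat).
Notation coinsT := (coins F v t).
Notation msgsT := (msgs F v).
Variable mu : {ffun msgsT -> rat}.

Lemma exists_unused (C : {set server t}) (f : server t -> 'I_t.+1) :
  (#|C| <= t)%N -> exists j0, forall s, s \in C -> f s != j0.
Proof.
move=> hC; have [j hj|hn] := pickP (fun j => j \notin f @: C).
  by exists j => s sC; apply: contraNneq hj => <-; apply: imset_f.
have : (#|[set: 'I_t.+1]| <= #|f @: C|)%N.
  by apply: subset_leq_card; apply/subsetP => j _; have := hn j => /negbFE.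
rewrite cardsT card_ord => /leq_trans/(_ (leq_trans (leq_imset_card _ _) hC)).
by rewrite ltnn.
Qed.

Lemma reliability : is_dist mu -> 2%N \in [pchar F] ->
  Pr mu (fun m (c : coinsT) => [forall i, R_output c m (origin c t.+1 i) == m i]) = 1.
Proof.
move=> [_ <-] char2; apply: eq_bigr => m _.
have N0 : #|[set c : coinsT | consistent c]|%:R != 0 :> rat.
  by rewrite pnatr_eq0 -lt0n card_consistent_gt0.
rewrite (eq_card (B := [set c : coinsT | consistent c])) ?mulfV ?mulr1 // => c.
rewrite !inE; case hc: (consistent c) => //=.
by apply/forallP => i; rewrite R_output_origin.
Qed.

Lemma origin_eqE (c : coinsT) x p :
  (origin c t.+1 x == p) = (x == ((route c t.+1)^-1)%g p).
Proof.
by rewrite origin_route; apply/eqP/eqP => [<-|->]; rewrite ?permK ?permKV.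
Qed.

Variables (C : {set server t}) (k0 j0 : 'I_t.+1).
Hypothesis C_avoids : forall s, s \in C -> s.1 != k0 /\ s.2 != j0.

Let C_avoids_j0 s (sC : s \in C) : s.2 != j0 := (C_avoids sC).2.
Let viewA_fiber w := #|[set c : coinsT | consistent c && (viewA C 0 c == w)]|.
Let viewFull_fiber w := #|[set c : coinsT | consistent c && (viewFull C 0 c == w)]|.

Lemma secret_privacy i :
  best_with mu (viewFull C) (fun m (c : coinsT) x => x == m i) =
  best_blind mu (fun m (c : coinsT) x => x == m i).
Proof.
by apply: (@best_with_eq_blind_coin_free _ _ _ _ _ mu (viewFull C) _ viewFull_fiber
          (fun m => card_viewFull_fiber_msg C_avoids_j0 m 0) (fun m x => x == m i)).
Qed.

Lemma pad_privacy p :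
  best_with mu (viewA C) (fun m (c : coinsT) x => x == pad c p) =
  best_blind mu (fun m (c : coinsT) x => x == pad c p).
Proof.
apply: (@best_with_eq_blind_swaps _ _ _ _ _ mu (viewA C) _ viewA_fiber (fun _ _ => erefl)
          (fun m c => pad c p)) => //.
move=> m x y; pose d : {ffun 'I_v -> F} := [ffun a => if a == p then y - x else 0].
exists (shift_pads j0 d), (shift_pads j0 (- d)); split; first exact: shift_padsK.
  by move=> c; rewrite consistent_shift_pads.
move=> c _; rewrite viewA_shift_pads //; split => //.
rewrite pad_shift_pads ffunE eqxx -subr_eq0 -[RHS]subr_eq0.
by rewrite (_ : y - (pad c p + (y - x)) = x - pad c p) //; ring.
Qed.

Lemma swap_coins_trades m x y : exists f g : coinsT -> coinsT, [/\ cancel f g,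
  forall c, consistent (f c) = consistent c &
  forall c, consistent c -> viewFull C m (f c) = viewFull C m c /\
    viewA C m (f c) = viewA C m c /\ origin (f c) t.+1 y = origin c t.+1 x].
Proof.
exists (swap_coins k0 j0 m x y), (swap_coins k0 j0 m x y); split.
- exact: swap_coinsK.
- exact: swap_coins_consistent.
- by move=> c _; rewrite viewFull_swap_coins // viewA_swap_coins // origin_swap_coins.
Qed.

Lemma receiver_anonymity p :
  best_with mu (viewA C) (fun m (c : coinsT) x => origin c t.+1 x == p) =
  best_blind mu (fun m (c : coinsT) x => origin c t.+1 x == p).
Proof.
apply: (@best_with_eq_blind_swaps _ _ _ _ _ mu (viewA C) _ viewA_fiber (fun _ _ => erefl)
          (fun m c => ((route c t.+1)^-1)%g p)) => [m c _ x|m x y].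
  exact: origin_eqE.
have [f [g [fK fcons fview]]] := swap_coins_trades m x y.
by exists f, g; split=> // c /fview[_ [-> ->]].
Qed.

Lemma sender_anonymity p :
  best_with mu (viewFull C) (fun m (c : coinsT) x => origin c t.+1 x == p) =
  best_blind mu (fun m (c : coinsT) x => origin c t.+1 x == p).
Proof.
apply: (@best_with_eq_blind_swaps _ _ _ _ _ mu (viewFull C) _ viewFull_fiber
          (fun m => card_viewFull_fiber_msg C_avoids_j0 m 0)
          (fun m c => ((route c t.+1)^-1)%g p)) => [m c _ x|m x y].
  exact: origin_eqE.
have [f [g [fK fcons fview]]] := swap_coins_trades m x y.
by exists f, g; split=> // c /fview[-> [_ ->]].
Qed.

End Properties.
Unset Implicit Arguments.

Theorem theorem1 (F : finFieldType) (t v : nat) (char2 : (2%N \in [pchar F])) :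
  (* perfect reliability: R recovers every sender's message *)
  (forall mu : {ffun msgs F v -> rat}, is_dist mu ->
     Pr mu (fun (m : msgs F v) (c : coins F v t) =>
       [forall i : 'I_v, R_output c m (origin c t.+1 i) == m i]) = 1) /\
  (forall (mu : {ffun msgs F v -> rat}), is_dist mu ->
   forall C : {set server t}, (#|C| <= t)%N ->
     (* perfect privacy of the senders' secrets *)
     (forall i : 'I_v,
        best_with mu (viewFull C) (fun m (c : coins F v t) (x : F) => x == m i)
        = best_blind mu (fun m (c : coins F v t) (x : F) => x == m i)) /\
     (* perfect privacy of the pads (phase A) *)
     (forall p : 'I_v,
        best_with mu (viewA C) (fun m (c : coins F v t) (x : F) => x == pad c p)
        = best_blind mu (fun m (c : coins F v t) (x : F) => x == pad c p)) /\
     (* perfect receiver anonymity: which sender received pad p *)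
     (forall p : 'I_v,
        best_with mu (viewA C) (fun m (c : coins F v t) (x : 'I_v) => origin c t.+1 x == p)
        = best_blind mu (fun m (c : coins F v t) (x : 'I_v) => origin c t.+1 x == p)) /\
     (* perfect sender anonymity: which sender sent the message in R's slot p *)
     (forall p : 'I_v,
        best_with mu (viewFull C) (fun m (c : coins F v t) (x : 'I_v) => origin c t.+1 x == p)
        = best_blind mu (fun m (c : coins F v t) (x : 'I_v) => origin c t.+1 x == p))).
Proof.
split=> [mu mu_dist|mu _ C card_C]; first exact: reliability.
have [j0 avoid_j0] := exists_unused (fun s : server t => s.2) card_C.
have [k0 avoid_k0] := exists_unused (fun s : server t => s.1) card_C.
have C_avoids s : s \in C -> s.1 != k0 /\ s.2 != j0.
  by move=> sC; split; [exact: avoid_k0 | exact: avoid_j0].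
split; [|split; [|split]] => p.
- exact: secret_privacy C_avoids p.
- exact: pad_privacy C_avoids p.
- exact: receiver_anonymity C_avoids p.
- exact: sender_anonymity C_avoids p.
Qed.
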